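(* Let $\varphi$ be a setfunction on a set-algebra $(J,\mathcal{B})$ with $\varphi(\emptyset)=0$. Then the quotient set $Q(\varphi)=\bigcup_{k\in\mathbb{N}}Q_k(\varphi)$ is quotient-closed and has the common lift property.
   Context: A set-algebra $(J,\mathcal{B})$ is a family $\mathcal{B}$ of subsets of $J$ containing $\emptyset$ and closed under complement and finite union. A setfunction on $(J,\mathcal{B})$ is a map $\varphi\colon\mathcal{B}\to\mathbb{R}$; all setfunctions satisfy $\varphi(\emptyset)=0$. A setfunction is finite if it is defined on $(J,2^J)$ with $J$ finite. $\mathbb{N}$ denotes the positive integers and $[k]=\{1,\dots,k\}$. For $k\in\mathbb{N}$ and a measurable map $F\colon J\to[k]$ (i.e. $F^{-1}(i)\in\mathcal{B}$ for every $i$), the quotient $\varphi\circ F^{-1}$ is the setfunction on $(\,[k],2^{[k]})$ given by $A\mapsto\varphi(F^{-1}(A))$. $Q_k(\varphi)\subseteq\mathbb{R}^{2^k}$ is the set of all such quotients of $\varphi$ on $[k]$. A setfunction $\varphi$ is a lift of $\varphi'$ if $\varphi'$ is a quotient of $\varphi$. A family $A$ of finite setfunctions is quotient-closed if every quotient of a function in $A$ belongs to $A$; it has the common lift property if every finite subset of $A$ has a common lift belonging to $A$. *)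

From HB Require Import structures.
From mathcomp Require Import all_boot all_order all_algebra.
From mathcomp Require Import classical_sets reals.
Set Implicit Arguments. Unset Strict Implicit. Unset Printing Implicit Defensive.
Local Open Scope classical_set_scope.

Definition set_algebra (J : Type) (B : set (set J)) : Prop :=
  [/\ B set0, (forall A, B A -> B (~` A)) & (forall A C, B A -> B C -> B (A `|` C))].

(* A setfunction on (J,B) is represented as a total map phi : set J -> R,
   of which only the values on B are relevant (quotients only evaluate phi
   on sets of B). *)

Definition measurable_map (J : Type) (B : set (set J)) (k : nat) (F : J -> 'I_k) : Prop :=
  forall i : 'I_k, B (F @^-1` [set i]).

Definition quot (R : Type) (J : Type) (phi : set J -> R) (k : nat) (F : J -> 'I_k)
  : {set 'I_k} -> R :=
  fun A => phi (F @^-1` [set i | i \in A]).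

Definition Qk (R : Type) (J : Type) (B : set (set J)) (phi : set J -> R) (k : nat)
  : set ({set 'I_k} -> R) :=
  [set psi | exists F : J -> 'I_k, measurable_map B F /\ psi = quot phi F].

Arguments Qk {R J} B phi k.

(* A finite setfunction on [k] = {1,...,k} (k a positive integer), encoded on 'I_k. *)
Unset Implicit Arguments.
Record finsf (R : Type) := FinSF {
  fs_k : nat;
  fs_pos : (0 < fs_k)%N;
  fs_fun : {set 'I_fs_k} -> R }.

Arguments fs_k {R}.
Arguments fs_pos {R}.
Arguments fs_fun {R}.
Set Implicit Arguments.

(* Q(phi) = union over k in N of Q_k(phi). *)
Definition Q (R : Type) (J : Type) (B : set (set J)) (phi : set J -> R) : set (finsf R) :=
  [set s | Qk B phi (fs_k s) (fs_fun s)].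

(* t is a quotient of the finite setfunction s (every map of a finite set is
   measurable w.r.t. the power set); equivalently s is a lift of t. *)
Definition is_fquotient (R : Type) (t s : finsf R) : Prop :=
  exists F : 'I_(fs_k s) -> 'I_(fs_k t),
    fs_fun t = (fun A : {set 'I_(fs_k t)} => fs_fun s (F @^-1: A)).

Definition quotient_closed (R : Type) (A : set (finsf R)) : Prop :=
  forall s t, A s -> is_fquotient t s -> A t.

Definition common_lift_property (R : Type) (A : set (finsf R)) : Prop :=
  forall (n : nat) (f : 'I_n -> finsf R), (forall i, A (f i)) ->
    exists L, A L /\ (forall i, is_fquotient (f i) L).

(** A quotient of a quotient is a quotient: the fibres of [G \o F] are finite
    unions of fibres of [F], hence lie in the set-algebra.  Finitely many
    quotients [phi \o F_i^-1] have the common lift [phi \o H^-1], where [H]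
    sends [x] to (an enumeration of) the tuple [(F_1 x, ..., F_n x)]: its
    fibres are finite intersections of fibres of the [F_i], and each [F_i]
    factors through [H] by projection on the [i]-th coordinate.  Neither
    argument uses the normalisation [phi set0 = 0]. *)

From mathcomp Require Import all_boot all_order all_algebra.
From mathcomp Require Import classical_sets boolp reals.
Set Implicit Arguments.
Unset Strict Implicit.
Unset Printing Implicit Defensive.

Local Open Scope classical_set_scope.
Local Open Scope ring_scope.

Section SetAlgebra.
Variables (J : Type) (B : set (set J)).
Hypothesis algB : set_algebra B.

Lemma set_algebra0 : B set0. Proof. by case: algB. Qed.

Lemma set_algebraC A : B A -> B (~` A).
Proof. by case: algB => _ + _; apply. Qed.

Lemma set_algebraU A C : B A -> B C -> B (A `|` C).
Proof. by case: algB => _ _; apply. Qed.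

Lemma set_algebraT : B setT.
Proof. by rewrite -setC0; apply/set_algebraC/set_algebra0. Qed.

Lemma set_algebraI A C : B A -> B C -> B (A `&` C).
Proof.
move=> BA BC; rewrite -(setCK (A `&` C)) setCI.
by apply/set_algebraC/set_algebraU; apply: set_algebraC.
Qed.

Lemma set_algebra_bigU (I : Type) (r : seq I) (P : pred I) (A : I -> set J) :
  (forall i, P i -> B (A i)) -> B (\big[setU/set0]_(i <- r | P i) A i).
Proof.
by move=> BA; apply: big_ind => //; [apply: set_algebra0 | apply: set_algebraU].
Qed.

Lemma set_algebra_bigI (I : Type) (r : seq I) (P : pred I) (A : I -> set J) :
  (forall i, P i -> B (A i)) -> B (\big[setI/setT]_(i <- r | P i) A i).
Proof.
by move=> BA; apply: big_ind => //; [apply: set_algebraT | apply: set_algebraI].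
Qed.

Lemma preimage_bigsetU k (F : J -> 'I_k) (S : set 'I_k) :
  F @^-1` S = \big[setU/set0]_(i in S) F @^-1` [set i].
Proof.
rewrite -bigcup_pred set_mem_set; apply/seteqP; split=> x /=.
  by move=> Sx; exists (F x).
by move=> [i Si /= ->].
Qed.

Lemma measurable_map_preimage k (F : J -> 'I_k) (S : set 'I_k) :
  measurable_map B F -> B (F @^-1` S).
Proof. by move=> measF; rewrite preimage_bigsetU; apply: set_algebra_bigU. Qed.

Lemma measurable_map_comp k m (F : J -> 'I_k) (G : 'I_k -> 'I_m) :
  measurable_map B F -> measurable_map B (G \o F).
Proof.
by move=> measF j; rewrite comp_preimage; apply: measurable_map_preimage.
Qed.

Section Product.
Variables (n : nat) (k : 'I_n -> nat) (F : forall i, J -> 'I_(k i)).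
Hypothesis measF : forall i, measurable_map B (F i).

Local Notation tuple_type := {dffun forall i, 'I_(k i)}.

Definition prod_code (x : J) : 'I_#|tuple_type| :=
  enum_rank (finfun (F^~ x) : tuple_type).

Definition prod_coord i (j : 'I_#|tuple_type|) : 'I_(k i) :=
  (enum_val j : tuple_type) i.

Lemma measurable_prod_code : measurable_map B prod_code.
Proof.
move=> j.
have -> : prod_code @^-1` [set j] =
          \big[setI/setT]_(i < n) F i @^-1` [set prod_coord i j].
  rewrite -(bigcap_seq_cond _ _ xpredT); apply/seteqP; split=> x /=.
    by move=> <- i _; rewrite /prod_coord /prod_code enum_rankK ffunE.
  move=> Fx; apply: (canLR enum_valK); apply/ffunP => i.
  by rewrite ffunE; apply: Fx; rewrite /= mem_index_enum.
by apply: set_algebra_bigI => i _; apply: measF.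
Qed.

Lemma prod_coordK i : prod_coord i \o prod_code = F i.
Proof.
by apply: funext => x; rewrite /= /prod_coord /prod_code enum_rankK ffunE.
Qed.

End Product.

End SetAlgebra.

Lemma quot_comp (R J : Type) (phi : set J -> R) k m
    (F : J -> 'I_k) (G : 'I_k -> 'I_m) :
  quot phi (G \o F) = fun A => quot phi F (G @^-1: A).
Proof.
apply: funext => A; rewrite /quot; congr phi.
by apply/seteqP; split=> x /=; rewrite inE.
Qed.

Section QuotientSet.
Variables (R J : Type) (B : set (set J)) (phi : set J -> R).
Hypothesis algB : set_algebra B.

Lemma Q_quotient_closed : quotient_closed (Q B phi).
Proof.
move=> s t [F [measF quotF]] [G quotG]; exists (G \o F); split.
  exact: measurable_map_comp.
by rewrite quotG quotF quot_comp.
Qed.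

Lemma Q_common_lift_property : common_lift_property (Q B phi).
Proof.
move=> n f Qf.
pose F i := sval (cid (Qf i)); have FP i := svalP (cid (Qf i)).
have code_pos : (0 < #|{dffun forall i, 'I_(fs_k (f i))}|)%N.
  by apply/card_gt0P; exists (finfun (fun i => Ordinal (fs_pos (f i)))).
exists (FinSF _ _ code_pos (quot phi (prod_code F))); split.
  exists (prod_code F); split=> //.
  by apply: measurable_prod_code => // i; case: (FP i).
move=> i; exists (prod_coord i); case: (FP i) => _ ->.
by rewrite -quot_comp prod_coordK.
Qed.

End QuotientSet.

Theorem lemma2p4 (R : realType) (J : Type) (B : set (set J)) (phi : set J -> R) :
  set_algebra B -> phi set0 = 0 ->
  quotient_closed (Q B phi) /\ common_lift_property (Q B phi).
Proof.
move=> algB _.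
by split; [apply: Q_quotient_closed | apply: Q_common_lift_property].
Qed.
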